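(* Let $n\ge 7$ be an integer and define the graph $G_n$ as follows. If $n$ is odd, $G_n$ has vertices $v_1,\dots,v_n$ and edges consisting of the cycle $v_1v_2\cdots v_{n-1}v_1$ together with the edges $v_1v_{(n+1)/2}$, $v_1v_n$, $v_{(n+1)/2}v_n$, and $v_iv_{n+1-i}$ for $i=2,3,\dots,(n-1)/2$. If $n$ is even, $G_n$ has vertices $v_1,\dots,v_n$ and edges consisting of the cycle $v_1v_2\cdots v_nv_1$ together with the edges $v_2v_{n/2}$, $v_{(n+4)/2}v_n$, and $v_iv_{n+2-i}$ for $i=2,3,\dots,n/2$. Then $G_n$ is connected of order $n$ and size $\lfloor 3n/2\rfloor+1$, and every minimum vertex cut of $G_n$ induces an edge; more precisely, for $n$ odd $\{v_1,v_{(n+1)/2}\}$ is the unique minimum vertex cut, and for $n$ even the minimum vertex cuts are exactly $\{v_2,v_n\}$ and $\{v_{n/2},v_{(n+4)/2}\}$. In particular $G_n$ has no independent minimum vertex cut.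
   Context: All graphs are finite and simple. A vertex cut of a connected graph $G$ is a set $S\subset V(G)$ such that $G-S$ is disconnected. If $G$ has connectivity $k$, a vertex cut $S$ is called minimum if $|S|=k$. A vertex cut $S$ is called an independent vertex cut if $S$ is an independent set of $G$. *)

From mathcomp Require Import all_boot.
Set Implicit Arguments. Unset Strict Implicit. Unset Printing Implicit Defensive.

(* A simple graph is a symmetric irreflexive relation e on a finType T. *)

Definition del_rel (T : finType) (e : rel T) (S : {set T}) : rel T :=
  [rel x y | [&& e x y, x \notin S & y \notin S]].

Definition connectedg (T : finType) (e : rel T) : Prop :=
  forall x y : T, connect e x y.

Definition vertex_cut (T : finType) (e : rel T) (S : {set T}) : Prop :=
  exists x y : T, [/\ x \notin S, y \notin S & ~~ connect (del_rel e S) x y].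

Definition min_vertex_cut (T : finType) (e : rel T) (S : {set T}) : Prop :=
  vertex_cut e S /\ forall S' : {set T}, vertex_cut e S' -> #|S| <= #|S'|.

Definition independent (T : finType) (e : rel T) (S : {set T}) : Prop :=
  forall x y, x \in S -> y \in S -> ~~ e x y.

Definition edge_set (T : finType) (e : rel T) : {set {set T}} :=
  [set A : {set T} | [exists x, exists y, e x y && (A == [set x; y])]].

(* The graph G_n. Vertex v_i (1 <= i <= n) is the ordinal i-1 : 'I_n.
   gbase n i j : (1-indexed) the listed edges v_i v_j, each listed with i < j. *)
Definition gbase (n i j : nat) : bool :=
  if odd n then
    [|| (1 <= i) && (j == i.+1) && (i <= n - 2)
      , (i == 1) && (j == n - 1)
      , (i == 1) && (j == n.+1./2)
      , (i == 1) && (j == n)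
      , (i == n.+1./2) && (j == n)
      | [&& 2 <= i, i <= n.-1./2 & j == n.+1 - i] ]
  else
    [|| (1 <= i) && (j == i.+1) && (i <= n - 1)
      , (i == 1) && (j == n)
      , (i == 2) && (j == n./2)
      , (i == (n + 4)./2) && (j == n)
      | [&& 2 <= i, i <= n./2 & j == n.+2 - i] ].

Definition Gadj (n : nat) : rel 'I_n :=
  fun x y : 'I_n => gbase n (val x).+1 (val y).+1 || gbase n (val y).+1 (val x).+1.

Definition vset (n : nat) (l : seq nat) : {set 'I_n} :=
  [set x : 'I_n | (val x).+1 \in l].

Arguments Gadj n : clear implicits.
Arguments vset n l : clear implicits.

From mathcomp Require Import all_boot zify.
Set Implicit Arguments. Unset Strict Implicit. Unset Printing Implicit Defensive.

(** Write n = 2k+1 or n = 2k+2 with k >= 3, and v_i as [vtx _ i].  For odd n,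
    every vertex but v_n lies on one of the cycles v_1 v_2 ... v_{k+1} and
    v_1 v_{k+1} v_{k+2} ... v_{2k}, and the rungs v_i v_{2k+2-i} match the
    vertices of each cycle that are not on the other one with those of the other
    one.  For even n the same holds for the disjoint cycles v_2 ... v_{k+1} and
    v_{k+3} ... v_{2k+2} with the rungs v_i v_{2k+4-i}, every vertex but v_1 and
    v_{k+2} lying on them.  Delete two vertices.  A cycle losing at most one of
    them stays connected; if one cycle loses both (and they are not the common
    vertices v_1, v_{k+1} of the odd case), the other one loses at most one, and
    every survivor of the first reaches it along its rung.  So the survivors on
    the cycles form one component, and each remaining degree-2 vertex joins it
    unless both of its neighbours were deleted.  Since a vertex cut with at most
    two vertices can be enlarged to a cut that is a pair, the minimum vertex
    cuts are exactly the neighbourhoods {v_1, v_{k+1}}, resp. {v_2, v_n} and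
    {v_{k+1}, v_{k+3}}, of the degree-2 vertices, and each of them is an edge. *)

(** * Vertex cuts of finite graphs *)

Section VertexCuts.
Variables (T : finType) (e : rel T).

Lemma del_rel_sym (S : {set T}) : symmetric e -> symmetric (del_rel e S).
Proof. by move=> esym x y; rewrite /del_rel /= esym [(x \notin S) && _]andbC. Qed.

Lemma connect_del_rel_sub (S S' : {set T}) : S \subset S' ->
  subrel (connect (del_rel e S')) (connect (del_rel e S)).
Proof.
move=> sub; apply: connect_sub => x y /and3P [exy xS' yS']; apply: connect1.
by rewrite /del_rel /= exy !(contra (subsetP sub _)).
Qed.

Lemma isolated_vertex_cut (S : {set T}) x y :
  x \notin S -> y \notin S -> x != y -> (forall z, e x z -> z \in S) -> vertex_cut e S.
Proof.
move=> xS yS xy xN; exists x, y; split=> //; apply/connectP => -[[|z p] /=].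
  by move=> _ yx; rewrite yx eqxx in xy.
by case/andP => /and3P [/xN zS _]; rewrite zS.
Qed.

Lemma connect_cycle_del (S : {set T}) (c : seq T) :
  symmetric e -> uniq c -> cycle e c ->
  {in c &, forall x y, x \in S -> y \in S -> x = y} ->
  forall x y, x \in c -> y \in c -> x \notin S -> y \notin S ->
    connect (del_rel e S) x y.
Proof.
move=> esym uc cc cS x y xc yc xS yS.
have [x0 [p [x0p cover]]] : exists x0 p, path (del_rel e S) x0 p /\
    forall z, z \in c -> z \notin S -> z \in x0 :: p.
  have del_path x0 p : all [pred w | w \notin S] (x0 :: p) -> path e x0 p ->
      path (del_rel e S) x0 p.
    by apply: sub_in_path => u v; rewrite !inE => uS vS euv; rewrite /del_rel /= euv uS vS.
  case: (pickP [pred z in c | z \in S]) => [z /andP [zc zS] | noS].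
    case: (rot_to zc) => i q Ec.
    have memc w : (w \in c) = (w \in z :: q) by rewrite -Ec mem_rot.
    have uq : uniq (z :: q) by rewrite -Ec rot_uniq.
    have cq : cycle e (z :: q) by rewrite -Ec rot_cycle.
    case: q uq cq memc {Ec} => [|x0 p] uq cq memc.
      by move: xc; rewrite memc inE => /eqP xz; rewrite xz zS in xS.
    exists x0, p; split; last first.
      by move=> w; rewrite memc inE => /orP [/eqP -> | //]; rewrite zS.
    apply: del_path; last by move: cq; rewrite /= rcons_path => /andP [_ /andP []].
    apply/allP => w wp /=; apply/negP => wS.
    have wz : w = z by apply: cS; rewrite // memc inE wp orbT.
    by move: uq; rewrite cons_uniq -wz wp.
  case: (rot_to xc) => i q Ec.
  exists x, q; split; last by move=> w; rewrite -Ec mem_rot.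
  have cq : cycle e (x :: q) by rewrite -Ec rot_cycle.
  apply: del_path; last by move: cq; rewrite /= rcons_path => /andP [].
  apply/allP => w; rewrite -Ec mem_rot => wc /=.
  by move: (noS w); rewrite /= wc; case: (w \in S).
have [x0x x0y] := (path_connect x0p (cover x xc xS), path_connect x0p (cover y yc yS)).
by apply: connect_trans x0y; rewrite (sym_connect_sym (del_rel_sym S esym)).
Qed.

Lemma vertex_cut_pair (S : {set T}) : 2 < #|T| -> #|S| <= 2 -> vertex_cut e S ->
  exists t u, [/\ S \subset [set t; u], (#|S| < 2 -> t = u) & vertex_cut e [set t; u]].
Proof.
move=> T_gt2 S_le2 cutS; have [x [y [xS yS xy]]] := cutS.
have [S0 | [S1 | /cards2P [t [u [tu St]]]]] : #|S| = 0 \/ #|S| = 1 \/ #|S| == 2 by lia.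
- have /card_gt0P [t] : 0 < #|~: [set x; y]|.
    by move: (cardsC [set x; y]); rewrite cards2; lia.
  rewrite !inE negb_or => /andP [tx ty].
  exists t, t; rewrite (cards0_eq S0) sub0set; split=> //; exists x, y.
  rewrite !inE !orbb (eq_sym x) (eq_sym y) tx ty; split=> //.
  by apply: contra xy; rewrite (cards0_eq S0); apply: connect_del_rel_sub; rewrite sub0set.
- move/eqP/cards1P: S1 => [t St]; exists t, t.
  by rewrite (setUid [set t]) -St; split.
- by exists t, u; rewrite St cards2 tu in cutS *.
Qed.

Section PairCuts.
Variable sp : pred {set T}.
Hypotheses (T_gt2 : 2 < #|T|) (sp_card : forall A, sp A -> #|A| = 2)
  (pair_cut_sp : forall t u, vertex_cut e [set t; u] -> sp [set t; u]).

Lemma no_small_vertex_cut (S : {set T}) : #|S| < 2 -> ~ vertex_cut e S.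
Proof.
move=> S1 cutS; have [t [u [_ tu cut_tu]]] := vertex_cut_pair T_gt2 (ltnW S1) cutS.
by move: (sp_card (pair_cut_sp cut_tu)); rewrite (tu S1) cards2 eqxx.
Qed.

Lemma connectedg_of_pair_cuts : connectedg e.
Proof.
move=> x y; apply/idPn => nxy; apply: (@no_small_vertex_cut set0); first by rewrite cards0.
exists x, y; rewrite !inE; split=> //; apply: contra nxy.
by apply: connect_sub => u v /andP [euv _]; apply: connect1.
Qed.

Lemma min_vertex_cut_pair_cuts : (forall A, sp A -> vertex_cut e A) -> (exists A, sp A) ->
  forall S, min_vertex_cut e S <-> sp S.
Proof.
move=> sp_cut [A spA] S; split=> [[cutS minS] | spS].
  have S2 : #|S| <= 2 by rewrite -(sp_card spA); apply: minS; apply: sp_cut.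
  have [t [u [Stu tu cut_tu]]] := vertex_cut_pair T_gt2 S2 cutS.
  have sp_tu := pair_cut_sp cut_tu.
  have S_eq2 : #|S| = 2.
    case: (ltnP #|S| 2) => [/tu t_u | ]; last by lia.
    by move: (sp_card sp_tu); rewrite t_u cards2 eqxx.
  suff -> : S = [set t; u] by [].
  by apply/eqP; rewrite eqEcard Stu (sp_card sp_tu) S_eq2.
split; first exact: sp_cut.
move=> S' cutS'; rewrite (sp_card spS); case: (ltnP #|S'| 2) => // S'1.
by case: (no_small_vertex_cut S'1 cutS').
Qed.

End PairCuts.

Lemma no_independent_min_vertex_cut :
  (forall S, min_vertex_cut e S -> exists x y, [/\ x \in S, y \in S & e x y]) ->
  ~ exists S, min_vertex_cut e S /\ independent e S.
Proof.
by move=> adj [S [/adj [x [y [xS yS exy]]] indS]]; move: (indS x y xS yS); rewrite exy.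
Qed.

End VertexCuts.

(** * Removing two vertices from G_n *)

Lemma cycle_cons_iota (r : rel nat) x i k : 0 < k ->
  r x i -> (forall l, i <= l -> l.+1 < i + k -> r l l.+1) -> r (i + k).-1 x ->
  cycle r (x :: iota i k).
Proof.
case: k => [//|k] _ rxi run rx /=; rewrite rxi /=.
elim: k i run rx {rxi} => [|k IH] i run rx /=.
  by rewrite addn1 /= in rx; rewrite rx.
rewrite run; [|lia|lia]; apply: IH; first by move=> l il li; apply: run; lia.
by rewrite addSnnS.
Qed.

Lemma uniq_cons_iota x i k : x < i -> uniq (x :: iota i k).
Proof. by move=> xi; rewrite cons_uniq iota_uniq mem_iota andbT; lia. Qed.

Definition adjn (n : nat) : rel nat := fun i j => gbase n i j || gbase n j i.

Section Labels.
Variable n : nat.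
Local Notation N := n.+1.

Definition vtx (i : nat) : 'I_N := inord i.-1.

Lemma vtxK i : 0 < i <= N -> (vtx i).+1 = i.
Proof. by move=> iN; rewrite /vtx inordK; lia. Qed.

Lemma vtx_val (x : 'I_N) : vtx x.+1 = x.
Proof. exact: inord_val. Qed.

Lemma eq_vtx i j : 0 < i <= N -> 0 < j <= N -> (vtx i == vtx j) = (i == j).
Proof.
move=> iN jN; apply/eqP/eqP => [/(congr1 (fun x : 'I_N => x.+1)) | -> //].
by rewrite !vtxK.
Qed.

Lemma Gadj_vtx i j : 0 < i <= N -> 0 < j <= N -> Gadj N (vtx i) (vtx j) = adjn N i j.
Proof. by move=> iN jN; rewrite /Gadj !vtxK. Qed.

Lemma mem_vtx2 k a b : 0 < k <= N -> 0 < a <= N -> 0 < b <= N ->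
  (vtx k \in [set vtx a; vtx b]) = (k == a) || (k == b).
Proof. by move=> kN aN bN; rewrite !inE !eq_vtx. Qed.

Lemma vset_pair i j : 0 < i <= N -> 0 < j <= N -> vset N [:: i; j] = [set vtx i; vtx j].
Proof.
move=> iN jN; apply/setP => x; rewrite !inE -(vtx_val x) !eq_vtx ?vtxK //;
  have := ltn_ord x; lia.
Qed.

End Labels.

Lemma Gadj_sym n : symmetric (Gadj n).
Proof. by move=> x y; rewrite /Gadj orbC. Qed.

Section PairRemoved.
Variables (n a b : nat).
Local Notation N := n.+1.
Local Notation S := [set vtx n a; vtx n b].
Local Notation both s := [&& a \in s, b \in s & a != b].
Local Notation outside i := [&& 0 < i <= N, (i != a)%N & (i != b)%N].
Hypotheses (aN : 0 < a <= N) (bN : 0 < b <= N).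

Definition linked i j := connect (del_rel (Gadj N) S) (vtx n i) (vtx n j).

Lemma vtx_notin i : outside i -> vtx n i \notin S.
Proof. by case/and3P => iN ia ib; rewrite mem_vtx2 // negb_or ia ib. Qed.

Lemma linked_edge i j : outside i -> outside j -> adjn N i j -> linked i j.
Proof.
move=> io jo ij; apply: connect1.
by rewrite /del_rel /= Gadj_vtx ?ij ?vtx_notin //; lia.
Qed.

Lemma linked_sym i j : linked i j = linked j i.
Proof. exact/sym_connect_sym/del_rel_sym/Gadj_sym. Qed.

Lemma linked_trans j i l : linked i j -> linked j l -> linked i l.
Proof. exact: connect_trans. Qed.

Lemma linked_cycle (s : seq nat) h : uniq s -> cycle (adjn N) s ->
  {in s, forall i, 0 < i <= N} -> ~~ both s -> h \in s -> outside h ->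
  forall i, i \in s -> outside i -> linked i h.
Proof.
move=> us cs sN ab hs ho i si io.
apply: (connect_cycle_del (c := map (vtx n) s)); rewrite ?map_f ?vtx_notin //.
- exact: Gadj_sym.
- by rewrite map_inj_in_uniq // => x y xs ys /eqP; rewrite eq_vtx ?sN // => /eqP.
- have := @cycle_map _ _ (vtx n) (Gadj N) s; rewrite /= => ->.
  rewrite (eq_in_cycle (e' := adjn N) (P := [pred i | 0 < i <= N])) //.
    by move=> x y xN yN; rewrite /= Gadj_vtx.
  exact/allP.
- move=> _ _ /mapP [x xs ->] /mapP [y ys ->].
  have [xN yN] := (sN x xs, sN y ys); rewrite !mem_vtx2 // => xab yab.
  apply/eqP; rewrite eq_vtx //; move: ab; apply: contraR => xy.
  case/orP: xab => /eqP xa; case/orP: yab => /eqP yb; subst; rewrite ?eqxx in xy *;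
    rewrite ?xs ?ys //= ?(negbTE xy) //; by rewrite eq_sym.
Qed.

Lemma linked_two_cycles (sL sU : seq nat) (p : nat -> nat) h :
  ~~ (both sL && both sU) ->
  (~~ both sL -> forall i, i \in sL -> outside i -> linked i h) ->
  (~~ both sU -> forall i, i \in sU -> outside i -> linked i h) ->
  (forall i, i \in sL -> i \notin sU ->
     [/\ p i \in sU, p i \notin sL, 0 < p i <= N & adjn N i (p i)]) ->
  (forall i, i \in sU -> i \notin sL ->
     [/\ p i \in sL, p i \notin sU, 0 < p i <= N & adjn N i (p i)]) ->
  forall i, (i \in sL) || (i \in sU) -> outside i -> linked i h.
Proof.
move=> nLU hL hU pL pU i iLU io.
wlog iL : sL sU nLU hL hU pL pU {iLU} / i \in sL.
  move=> side; case/orP: iLU => [iL | iU]; first exact: (side sL sU).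
  by apply: (side sU sL) => //; rewrite andbC.
case: (boolP (both sL)) => [bL | /hL]; last exact.
have nbU : ~~ both sU by move: nLU; rewrite bL.
case: (boolP (i \in sU)) => iU; first exact: hU.
have [pU' pL' pN ip] := pL i iL iU.
have po : outside (p i).
  case/and3P: bL => [aL bL' _]; rewrite pN /=.
  by apply/andP; split; apply: (contraNneq _ pL') => ->.
exact: linked_trans (linked_edge io po ip) (hU nbU _ pU' po).
Qed.

Lemma hub_not_vertex_cut h : (forall i, outside i -> linked i h) ->
  ~ vertex_cut (Gadj N) S.
Proof.
move=> hub [x [y [xS yS /negP []]]].
have xN : 0 < x.+1 <= N by have := ltn_ord x; lia.
have yN : 0 < y.+1 <= N by have := ltn_ord y; lia.
rewrite -(vtx_val x) -(vtx_val y) !mem_vtx2 // !negb_or in xS yS *.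
apply: (linked_trans (hub _ _)); first by rewrite xN.
by rewrite linked_sym hub // yN.
Qed.

End PairRemoved.

Lemma gbase_odd k i j : gbase k.*2.+1 i j =
  [|| [&& 0 < i, j == i.+1 & i < k.*2], (i == 1) && (j == k.*2),
      (i == 1) && (j == k.+1), (i == 1) && (j == k.*2.+1),
      (i == k.+1) && (j == k.*2.+1) | [&& 1 < i, i <= k & j + i == k.*2.+2]].
Proof. by rewrite /gbase /= odd_double /= doubleK; congr [|| _, _, _, _, _ | _]; lia. Qed.

Lemma gbase_even k i j : gbase k.*2.+2 i j =
  [|| [&& 0 < i, j == i.+1 & i <= k.*2.+1], (i == 1) && (j == k.*2.+2),
      (i == 2) && (j == k.+1), (i == k.+3) && (j == k.*2.+2)
    | [&& 1 < i, i <= k.+1 & j + i == k.*2.+4]].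
Proof.
rewrite /gbase /= odd_double /= (_ : k.*2 + 4 = k.+2.*2) ?doubleK; last lia.
by congr [|| _, _, _ | _]; lia.
Qed.

(* [lia] is very slow on the whole disjunction [gbase]: pick a disjunct first. *)
Ltac pick_disjunct := lazymatch goal with
  | |- is_true (_ || _) => apply/orP; first [left; pick_disjunct | right; pick_disjunct]
  | _ => lia
  end.
Ltac solve_adjn := rewrite /adjn ?gbase_odd ?gbase_even; pick_disjunct.

Lemma cycle_odd_low k : 0 < k -> cycle (adjn k.*2.+1) (1 :: iota 2 k).
Proof. by move=> k_gt0; apply: cycle_cons_iota => // *; solve_adjn. Qed.

Lemma cycle_odd_high k : 0 < k -> cycle (adjn k.*2.+1) (1 :: iota k.+1 k).
Proof. by move=> k_gt0; apply: cycle_cons_iota => // *; solve_adjn. Qed.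

Lemma cycle_even_low k : 1 < k -> cycle (adjn k.*2.+2) (2 :: iota 3 k.-1).
Proof. by move=> k_gt1; apply: cycle_cons_iota => *; [lia | solve_adjn ..]. Qed.

Lemma cycle_even_high k : 1 < k -> cycle (adjn k.*2.+2) (k.+3 :: iota k.+4 k.-1).
Proof. by move=> k_gt1; apply: cycle_cons_iota => *; [lia | solve_adjn ..]. Qed.

Lemma adjn_odd_rung k i : 1 < i <= k.*2 -> i != k.+1 -> adjn k.*2.+1 i (k.*2.+2 - i).
Proof. by move=> *; case: (leqP i k) => ?; solve_adjn. Qed.

Lemma adjn_even_rung k i : 1 < i <= k.*2.+2 -> i != k.+2 -> adjn k.*2.+2 i (k.*2.+4 - i).
Proof. by move=> *; case: (leqP i k.+1) => ?; solve_adjn. Qed.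

Section OddPair.
Variables (k a b : nat).
Hypotheses (k_gt2 : 2 < k) (aN : 0 < a <= k.*2.+1) (bN : 0 < b <= k.*2.+1).
Local Notation N := k.*2.+1.
Local Notation v := (vtx k.*2).
Local Notation both s := [&& a \in s, b \in s & a != b].
Local Notation outside i := [&& 0 < i <= N, (i != a)%N & (i != b)%N].
Local Notation linked := (linked k.*2 a b).

Lemma odd_cycles_linked h :
  (h == 1) || (h == k.+1) -> h != a -> h != b ->
  ~~ [|| (a == 1) && (b == k.+1) | (a == k.+1) && (b == 1)] ->
  forall i, 0 < i <= k.*2 -> outside i -> linked i h.
Proof.
pose sL := 1 :: iota 2 k; pose sU := 1 :: iota k.+1 k.
have memL i : (i \in sL) = (0 < i <= k.+1) by rewrite inE mem_iota; lia.
have memU i : (i \in sU) = (i == 1) || (k < i <= k.*2) by rewrite inE mem_iota; lia.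
have rungL i : i \in sL -> i \notin sU -> [/\ k.*2.+2 - i \in sU, k.*2.+2 - i \notin sL,
    0 < k.*2.+2 - i <= N & adjn N i (k.*2.+2 - i)].
  by rewrite !memL !memU => *; split; [lia | lia | lia | apply: adjn_odd_rung; lia].
have rungU i : i \in sU -> i \notin sL -> [/\ k.*2.+2 - i \in sL, k.*2.+2 - i \notin sU,
    0 < k.*2.+2 - i <= N & adjn N i (k.*2.+2 - i)].
  by rewrite !memL !memU => *; split; [lia | lia | lia | apply: adjn_odd_rung; lia].
move=> h1 ha hb nsp i iN io.
have {nsp} nboth : ~~ (both sL && both sU) by rewrite !memL !memU; lia.
apply: (linked_two_cycles aN bN nboth _ _ rungL rungU _ io) => [ab | ab | ].
- apply: (linked_cycle aN bN (uniq_cons_iota _ _) (cycle_odd_low _)) => //;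
    try move=> l; rewrite ?inE ?mem_iota; lia.
- apply: (linked_cycle aN bN (uniq_cons_iota _ _) (cycle_odd_high _)) => //;
    try move=> l; rewrite ?inE ?mem_iota; lia.
- by rewrite memL memU; lia.
Qed.

Lemma odd_pair_cut : vertex_cut (Gadj N) [set v a; v b] -> [set v a; v b] = [set v 1; v k.+1].
Proof.
apply: contraPeq => nsp.
have {}nsp : ~~ [|| (a == 1) && (b == k.+1) | (a == k.+1) && (b == 1)].
  by apply: contra nsp => /orP [] /andP [/eqP -> /eqP ->]; rewrite // setUC.
have [h [h1 ha hb]] : exists h, [/\ (h == 1) || (h == k.+1), h != a & h != b].
  case: (eqVneq a 1) (eqVneq b 1) => [a1|a1] [b1|b1];
    first [by exists 1; split; lia | by exists k.+1; split; lia].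
apply: (hub_not_vertex_cut aN bN (h := h)) => i io.
case: (leqP i k.*2) => iN; first by apply: (odd_cycles_linked h1 ha hb nsp); lia.
have {iN} ei : i = N by lia; subst i.
by apply: (linked_edge aN bN) => //; [lia | case/orP: h1 => /eqP ->; solve_adjn].
Qed.

End OddPair.

Lemma exists_free_rung k a b : 2 < k ->
  exists r, [/\ 1 < r <= 4, r != a, r != b, k.*2.+4 - r != a & k.*2.+4 - r != b].
Proof.
move=> k_gt2; case: (boolP [&& 2 != a, 2 != b, k.*2.+2 != a & k.*2.+2 != b]) => [? | ?];
  first by exists 2; split; lia.
case: (boolP [&& 3 != a, 3 != b, k.*2.+1 != a & k.*2.+1 != b]) => [? | ?];
  first by exists 3; split; lia.
by exists 4; split; lia.
Qed.

Section EvenPair.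
Variables (k a b : nat).
Hypotheses (k_gt2 : 2 < k) (aN : 0 < a <= k.*2.+2) (bN : 0 < b <= k.*2.+2).
Local Notation N := k.*2.+2.
Local Notation v := (vtx k.*2.+1).
Local Notation both s := [&& a \in s, b \in s & a != b].
Local Notation outside i := [&& 0 < i <= N, (i != a)%N & (i != b)%N].
Local Notation linked := (linked k.*2.+1 a b).

Lemma even_prism_linked : exists r, forall i,
  [|| 1 < i <= k.+1 | k.+2 < i <= N] -> outside i -> linked i r.
Proof.
pose sL := 2 :: iota 3 k.-1; pose sU := k.+3 :: iota k.+4 k.-1.
have memL i : (i \in sL) = (1 < i <= k.+1) by rewrite inE mem_iota; lia.
have memU i : (i \in sU) = (k.+2 < i <= N) by rewrite inE mem_iota; lia.
have rungL i : i \in sL -> i \notin sU -> [/\ k.*2.+4 - i \in sU, k.*2.+4 - i \notin sL,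
    0 < k.*2.+4 - i <= N & adjn N i (k.*2.+4 - i)].
  by rewrite !memL !memU => *; split; [lia | lia | lia | apply: adjn_even_rung; lia].
have rungU i : i \in sU -> i \notin sL -> [/\ k.*2.+4 - i \in sL, k.*2.+4 - i \notin sU,
    0 < k.*2.+4 - i <= N & adjn N i (k.*2.+4 - i)].
  by rewrite !memL !memU => *; split; [lia | lia | lia | apply: adjn_even_rung; lia].
have [r [r4 ra rb r'a r'b]] := exists_free_rung a b k_gt2.
have r'r : linked (k.*2.+4 - r) r.
  rewrite linked_sym; apply: (linked_edge aN bN); [lia | lia | apply: adjn_even_rung; lia].
exists r => i iLU io.
apply: (linked_two_cycles aN bN _ _ _ rungL rungU _ io) => [ | ab | ab | ].
- by rewrite !memL !memU; lia.
- apply: (linked_cycle aN bN (uniq_cons_iota _ _) (cycle_even_low _)) => //;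
    try move=> l; rewrite ?inE ?mem_iota; lia.
- move=> j jU jo; apply: linked_trans r'r.
  apply: (linked_cycle aN bN (uniq_cons_iota _ _) (cycle_even_high _)) => //;
    try move=> l; rewrite ?inE ?mem_iota; lia.
- by rewrite memL memU.
Qed.

Lemma even_pair_cut : vertex_cut (Gadj N) [set v a; v b] ->
  [set v a; v b] = [set v 2; v N] \/ [set v a; v b] = [set v k.+1; v k.+3].
Proof.
move=> cut; case: (eqVneq [set v a; v b] [set v 2; v N]) => [|nsp1]; first by left.
case: (eqVneq [set v a; v b] [set v k.+1; v k.+3]) => [|nsp2]; first by right.
exfalso; move: cut; have [r prism] := even_prism_linked.
have [j1 [j1E j1a j1b]] : exists j, [/\ (j == 2) || (j == N), j != a & j != b].
  have {}nsp1 : ~~ [|| (a == 2) && (b == N) | (a == N) && (b == 2)].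
    by apply: contra nsp1 => /orP [] /andP [/eqP -> /eqP ->]; rewrite // setUC.
  case: (eqVneq a 2) (eqVneq b 2) => [a2|a2] [b2|b2];
    first [by exists 2; split; lia | by exists N; split; lia].
have [j2 [j2E j2a j2b]] : exists j, [/\ (j == k.+1) || (j == k.+3), j != a & j != b].
  have {}nsp2 : ~~ [|| (a == k.+1) && (b == k.+3) | (a == k.+3) && (b == k.+1)].
    by apply: contra nsp2 => /orP [] /andP [/eqP -> /eqP ->]; rewrite // setUC.
  case: (eqVneq a k.+1) (eqVneq b k.+1) => [ak|ak] [bk|bk];
    first [by exists k.+1; split; lia | by exists k.+3; split; lia].
apply: (hub_not_vertex_cut aN bN (h := r)) => i io.
case: (boolP [|| 1 < i <= k.+1 | k.+2 < i <= N]) => iLU; first exact: prism.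
have [] : i = 1 \/ i = k.+2 by lia.
- move=> ?; subst i; apply: (linked_trans (j := j1)); last by apply: prism; lia.
  by apply: (linked_edge aN bN); [lia | lia | case/orP: j1E => /eqP ->; solve_adjn].
- move=> ?; subst i; apply: (linked_trans (j := j2)); last by apply: prism; lia.
  by apply: (linked_edge aN bN); [lia | lia | case/orP: j2E => /eqP ->; solve_adjn].
Qed.

End EvenPair.

(** * Counting edges *)

Lemma mem_map_graph (s : seq nat) (f : nat -> nat) i j :
  ((i, j) \in [seq (l, f l) | l <- s]) = (i \in s) && (j == f i).
Proof.
apply/mapP/andP => [[l ls [-> ->]] | [si /eqP ->]]; first by [].
by exists i.
Qed.

Lemma card_edge_set n (L : seq (nat * nat)) : uniq L ->
  (forall i j, gbase n.+1 i j = ((i, j) \in L)) ->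
  (forall i j, gbase n.+1 i j -> [&& 0 < i, i < j & j <= n.+1]) ->
  #|edge_set (Gadj n.+1)| = size L.
Proof.
move=> uL memL ordL.
have Lord p : p \in L -> [&& 0 < p.1, p.1 < p.2 & p.2 <= n.+1].
  by case: p => i j; rewrite -memL; apply: ordL.
pose f (p : nat * nat) := [set vtx n p.1; vtx n p.2].
have E : edge_set (Gadj n.+1) =i map f L.
  move=> A; rewrite inE; apply/existsP/mapP.
  - case=> x /existsP [y /andP [xy /eqP ->]]; move: xy; rewrite /Gadj.
    case/orP; rewrite memL => pL; [exists (x.+1, y.+1) | exists (y.+1, x.+1)] => //;
      by rewrite /f /= !vtx_val // setUC.
  - case=> -[i j] pL ->; have /= ij := Lord _ pL.
    exists (vtx n i); apply/existsP; exists (vtx n j).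
    by rewrite /f Gadj_vtx ?eqxx ?andbT /adjn ?memL ?pL //; lia.
rewrite (eq_card E) (card_uniqP _) ?size_map // map_inj_in_uniq //.
move=> [i j] [i' j'] /Lord /= ij /Lord /= ij' /setP; rewrite /f /= => fE.
move: (fE (vtx n i)) (fE (vtx n j)); rewrite !mem_vtx2 ?eqxx ?orbT //; try lia.
by move=> /esym hi /esym hj; apply/eqP; rewrite xpair_eqE; lia.
Qed.

Definition odd_edges k : seq (nat * nat) :=
  [seq (i, i.+1) | i <- iota 1 (k.*2 - 1)] ++
  [:: (1, k.*2); (1, k.+1); (1, k.*2.+1); (k.+1, k.*2.+1)] ++
  [seq (i, k.*2.+2 - i) | i <- iota 2 (k - 1)].

Definition even_edges k : seq (nat * nat) :=
  [seq (i, i.+1) | i <- iota 1 k.*2.+1] ++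
  [:: (1, k.*2.+2); (2, k.+1); (k.+3, k.*2.+2)] ++
  [seq (i, k.*2.+4 - i) | i <- iota 2 k].

Lemma mem_odd_edges k i j : gbase k.*2.+1 i j = ((i, j) \in odd_edges k).
Proof.
rewrite gbase_odd !mem_cat !mem_map_graph !inE !xpair_eqE !mem_iota -!orbA.
by congr [|| _, _, _, _, _ | _]; lia.
Qed.

Lemma mem_even_edges k i j : gbase k.*2.+2 i j = ((i, j) \in even_edges k).
Proof.
rewrite gbase_even !mem_cat !mem_map_graph !inE !xpair_eqE !mem_iota -!orbA.
by congr [|| _, _, _ | _]; lia.
Qed.

Lemma odd_edges_uniq k : 2 < k -> uniq (odd_edges k).
Proof.
move=> k_gt2; rewrite /odd_edges cat_uniq; apply/and3P; split.
- by rewrite map_inj_uniq ?iota_uniq // => i j [].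
- apply/hasPn => -[x y]; rewrite mem_cat !inE !xpair_eqE !mem_map_graph !mem_iota; lia.
rewrite cat_uniq; apply/and3P; split.
- by rewrite /= ?inE ?xpair_eqE; lia.
- by apply/hasPn => -[x y]; rewrite !inE !xpair_eqE !mem_map_graph !mem_iota; lia.
by rewrite map_inj_uniq ?iota_uniq // => i j [].
Qed.

Lemma even_edges_uniq k : 2 < k -> uniq (even_edges k).
Proof.
move=> k_gt2; rewrite /even_edges cat_uniq; apply/and3P; split.
- by rewrite map_inj_uniq ?iota_uniq // => i j [].
- apply/hasPn => -[x y]; rewrite mem_cat !inE !xpair_eqE !mem_map_graph !mem_iota; lia.
rewrite cat_uniq; apply/and3P; split.
- by rewrite /= ?inE ?xpair_eqE; lia.
- by apply/hasPn => -[x y]; rewrite !inE !xpair_eqE !mem_map_graph !mem_iota; lia.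
by rewrite map_inj_uniq ?iota_uniq // => i j [].
Qed.

Lemma card_edge_set_odd k : 2 < k -> #|edge_set (Gadj k.*2.+1)| = (3 * k.*2.+1)./2 + 1.
Proof.
move=> k_gt2; rewrite (@card_edge_set k.*2 (odd_edges k)) ?odd_edges_uniq //.
- rewrite (_ : 3 * k.*2.+1 = (3 * k).+1.*2.+1) /= ?uphalf_double; last lia.
  by rewrite !size_cat !size_map !size_iota /=; lia.
- exact: mem_odd_edges.
- by move=> i j; rewrite gbase_odd; lia.
Qed.

Lemma card_edge_set_even k : 2 < k -> #|edge_set (Gadj k.*2.+2)| = (3 * k.*2.+2)./2 + 1.
Proof.
move=> k_gt2; rewrite (@card_edge_set k.*2.+1 (even_edges k)) ?even_edges_uniq //.
- rewrite (_ : 3 * k.*2.+2 = (3 * k.+1).*2) ?doubleK; last lia.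
  by rewrite !size_cat !size_map !size_iota /=; lia.
- exact: mem_even_edges.
- by move=> i j; rewrite gbase_even; lia.
Qed.

Lemma Gadj_odd_spec k : 2 < k ->
  [/\ connectedg (Gadj k.*2.+1),
      forall S, min_vertex_cut (Gadj k.*2.+1) S <-> S = vset k.*2.+1 [:: 1; k.*2.+2./2]
    & forall S, min_vertex_cut (Gadj k.*2.+1) S ->
        exists x y, [/\ x \in S, y \in S & Gadj k.*2.+1 x y]].
Proof.
move=> k_gt2; pose A := [set vtx k.*2 1; vtx k.*2 k.+1].
have T_gt2 : 2 < #|'I_k.*2.+1| by rewrite card_ord; lia.
have A_card B : pred1 A B -> #|B| = 2.
  by move/eqP ->; rewrite cards2 eq_vtx //; lia.
have pair_cut t u : vertex_cut (Gadj k.*2.+1) [set t; u] -> pred1 A [set t; u].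
  have [tN uN] := (ltn_ord t, ltn_ord u).
  by rewrite /= -(vtx_val t) -(vtx_val u) => /odd_pair_cut -> //; lia.
have A_cut B : pred1 A B -> vertex_cut (Gadj k.*2.+1) B.
  move/eqP ->; apply: (@isolated_vertex_cut _ _ _ (vtx k.*2 k.*2.+1) (vtx k.*2 2));
    rewrite ?mem_vtx2 ?eq_vtx //; try lia.
  move=> z; have zN := ltn_ord z; rewrite -(vtx_val z) Gadj_vtx ?mem_vtx2; try lia.
  by rewrite /adjn !gbase_odd; lia.
have charac := min_vertex_cut_pair_cuts T_gt2 A_card pair_cut A_cut (ex_intro _ A (eqxx A)).
split.
- exact: connectedg_of_pair_cuts T_gt2 A_card pair_cut.
- move=> S; rewrite /= doubleK vset_pair ?charac; try lia.
  by split=> /eqP.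
- move=> S /charac /eqP ->; exists (vtx k.*2 1), (vtx k.*2 k.+1).
  by rewrite !inE !eqxx orbT Gadj_vtx; try lia; split=> //; solve_adjn.
Qed.

Lemma Gadj_even_spec k : 2 < k ->
  [/\ connectedg (Gadj k.*2.+2),
      forall S, min_vertex_cut (Gadj k.*2.+2) S <->
        S = vset k.*2.+2 [:: 2; k.*2.+2] \/
        S = vset k.*2.+2 [:: k.*2.+2./2; (k.*2.+2 + 4)./2]
    & forall S, min_vertex_cut (Gadj k.*2.+2) S ->
        exists x y, [/\ x \in S, y \in S & Gadj k.*2.+2 x y]].
Proof.
move=> k_gt2; pose v := vtx k.*2.+1.
pose A1 := [set v 2; v k.*2.+2]; pose A2 := [set v k.+1; v k.+3].
pose sp B := (B == A1) || (B == A2).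
have T_gt2 : 2 < #|'I_k.*2.+2| by rewrite card_ord; lia.
have sp_card B : sp B -> #|B| = 2.
  by case/orP => /eqP ->; rewrite cards2 eq_vtx //; lia.
have pair_cut t u : vertex_cut (Gadj k.*2.+2) [set t; u] -> sp [set t; u].
  have [tN uN] := (ltn_ord t, ltn_ord u).
  rewrite /sp -(vtx_val t) -(vtx_val u) => /even_pair_cut [] // -> ; rewrite eqxx ?orbT //; lia.
have sp_cut B : sp B -> vertex_cut (Gadj k.*2.+2) B.
  case/orP => /eqP ->.
  - apply: (@isolated_vertex_cut _ _ _ (v 1) (v 3)); rewrite ?mem_vtx2 ?eq_vtx //; try lia.
    move=> z; have zN := ltn_ord z; rewrite -(vtx_val z) Gadj_vtx ?mem_vtx2; try lia.
    by rewrite /adjn !gbase_even; lia.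
  - apply: (@isolated_vertex_cut _ _ _ (v k.+2) (v 1)); rewrite ?mem_vtx2 ?eq_vtx //; try lia.
    move=> z; have zN := ltn_ord z; rewrite -(vtx_val z) Gadj_vtx ?mem_vtx2; try lia.
    by rewrite /adjn !gbase_even; lia.
have charac := min_vertex_cut_pair_cuts T_gt2 sp_card pair_cut sp_cut
  (ex_intro _ A1 (introT orP (or_introl (eqxx A1)))).
split.
- exact: connectedg_of_pair_cuts T_gt2 sp_card pair_cut.
- have -> : (k.*2.+2)./2 = k.+1 by rewrite /= doubleK.
  have -> : (k.*2.+2 + 4)./2 = k.+3 by rewrite (_ : _ + 4 = k.+3.*2) ?doubleK; last lia.
  move=> S; rewrite !vset_pair ?charac; try lia.
  by split=> [/orP [] /eqP | [] ->]; [left | right | rewrite /sp eqxx | rewrite /sp eqxx orbT].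
- move=> S /charac /orP [] /eqP ->; [exists (v 2), (v k.*2.+2) | exists (v k.+1), (v k.+3)];
    by rewrite !inE !eqxx ?orbT Gadj_vtx; try lia; split=> //; solve_adjn.
Qed.

Theorem mainTheorem7 (n : nat) (hn : 7 <= n) :
  [/\ connectedg (Gadj n),
      #|'I_n| = n &
      #|edge_set (Gadj n)| = (3 * n)./2 + 1] /\
  [/\ (forall S : {set 'I_n}, min_vertex_cut (Gadj n) S ->
         exists x y : 'I_n, [/\ x \in S, y \in S & Gadj n x y]),
      (odd n -> forall S : {set 'I_n},
         min_vertex_cut (Gadj n) S <-> S = vset n [:: 1; n.+1./2]),
      (~~ odd n -> forall S : {set 'I_n},
         min_vertex_cut (Gadj n) S <->
         (S = vset n [:: 2; n] \/ S = vset n [:: n./2; (n + 4)./2]))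
    & ~ (exists S : {set 'I_n}, min_vertex_cut (Gadj n) S /\ independent (Gadj n) S)].
Proof.
have [k [k_gt2 [-> | ->]]] : exists k, 2 < k /\ (n = k.*2.+1 \/ n = k.*2.+2).
  by have := odd_double_half n; case: (odd n) => /= nE; [exists n./2 | exists n./2.-1]; lia.
- have [conn charac adj] := Gadj_odd_spec k_gt2.
  split; split=> //; [exact: card_ord | exact: card_edge_set_odd | | ].
  + by rewrite /= odd_double.
  + exact: no_independent_min_vertex_cut.
- have [conn charac adj] := Gadj_even_spec k_gt2.
  split; split=> //; [exact: card_ord | exact: card_edge_set_even | | ].
  + by rewrite /= odd_double.
  + exact: no_independent_min_vertex_cut.
Qed.
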